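(* Let $n$ be a positive integer divisible by $8$, let $\varepsilon>0$ and $d=1/(128\varepsilon)$. For $S\subseteq[n]$ with $|S|=n/2$, let $G_S$ be the weighted complete bipartite graph on $[n]$ with an edge between every vertex of $S$ and every vertex of $[n]\setminus S$, each of weight $2d/n$. Let $\mathcal A$ be a collection of such graphs $G_S$ such that for any two distinct $G_S,G_T\in\mathcal A$, $\frac n8<|S\cap T|<\frac{3n}8$. Then for any distinct $G_S,G_T\in\mathcal A$ and any $R\subseteq[n]$: if $\Phi_{G_S}(R)>\frac{7nd}{16}$, then $\Phi_{G_T}(R)\le\frac{6nd}{16}$.
   Context: For a weighted graph $G$ on $[n]$ and $R\subseteq[n]$, $\Phi_G(R)$ denotes the total weight of edges with exactly one endpoint in $R$ (the cut specified by $R$). *)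

From HB Require Import structures.
From mathcomp Require Import all_boot all_order all_algebra.
Set Implicit Arguments. Unset Strict Implicit. Unset Printing Implicit Defensive.
Import Order.TTheory GRing.Theory Num.Theory.
Local Open Scope ring_scope.

(* A weighted graph on [n] = 'I_n is given by a symmetric weight function
   w : 'I_n -> 'I_n -> R; the weight of the (unordered) edge {i,j} is w i j. *)

Definition bipG (R : numFieldType) (n : nat) (d : R) (S : {set 'I_n})
  (i j : 'I_n) : R :=
  if (i \in S) != (j \in S) then 2 * d / n%:R else 0.

Definition cutw (R : numFieldType) (n : nat) (w : 'I_n -> 'I_n -> R)
  (X : {set 'I_n}) : R :=
  \sum_(i < n) \sum_(j < n | (i < j)%N && ((i \in X) != (j \in X))) w i j.

From HB Require Import structures.
From mathcomp Require Import all_boot all_order all_algebra.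
From mathcomp Require Import ring lra.
Set Implicit Arguments. Unset Strict Implicit. Unset Printing Implicit Defensive.
Import Order.TTheory GRing.Theory Num.Theory.
Local Open Scope ring_scope.

(* Encode membership in a set U by the spin (-1 on U, +1 off U); then
   [(i \in U) != (j \in U)] = (1 - spin U i * spin U j) / 2, and summing the
   product of two such indicators over all pairs gives
     cut of G_S at X = (2d/n)/8 * (n^2 - (sum spin X)^2 - (sum spin S)^2 + c_S^2),
   where c_S is the correlation sum_i spin X i * spin S i.  For |S| = n/2 the
   spin sum of S vanishes, so a cut above 7nd/16 forces c_S^2 > 3n^2/4.  Pairing
   spin X against spin S +- spin T gives |c_S| + |c_T| <= n + |sum spin S * spin T|,
   and the last sum is 4|S n T| - n, which lies in (-n/2, n/2).  Hence
   |c_T| < 3n/2 - (sqrt 3/2) n, so c_T^2 <= n^2/2 and the cut of G_T is at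
   most 6nd/16. *)

Lemma sum_pairs_sym (V : nmodType) (n : nat) (F : 'I_n -> 'I_n -> V) :
    (forall i j, F i j = F j i) -> (forall i, F i i = 0) ->
  \sum_i \sum_j F i j = (\sum_(i < n) \sum_(j < n | (i < j)%N) F i j) *+ 2.
Proof.
move=> F_sym F_diag.
have below : \sum_(i < n) \sum_(j < n | ~~ (i < j)%N) F i j =
             \sum_(i < n) \sum_(j < n | (i < j)%N) F i j.
  transitivity (\sum_(i < n) \sum_(j < n | (j < i)%N) F i j).
    apply: eq_bigr => i _; rewrite (bigD1 i) ?ltnn //= F_diag add0r.
    by apply: eq_bigl => j; rewrite -leqNgt ltn_neqAle andbC.
  rewrite (exchange_big_dep xpredT) //=.
  by apply: eq_bigr => j _; apply: eq_bigr => i _; rewrite F_sym.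
rewrite mulr2n -{1}below -big_split /=.
by apply: eq_bigr => i _; rewrite (bigID (fun j : 'I_n => (i < j)%N)) addrC.
Qed.

Lemma double_sum_product_expansion (R : comPzRingType) (I : finType) (x y : I -> R) :
  \sum_i \sum_j (1 - x i * x j) * (1 - y i * y j) =
  #|I|%:R ^+ 2 - (\sum_i x i) ^+ 2 - (\sum_i y i) ^+ 2 + (\sum_i x i * y i) ^+ 2.
Proof.
have sqr_sum (f : I -> R) : (\sum_i f i) ^+ 2 = \sum_i \sum_j f i * f j.
  by rewrite expr2 big_distrlr.
rewrite -[#|I|%:R](sumr_const _ (1 : R)) !sqr_sum -!sumrB -!big_split /=.
by apply: eq_bigr => i _; rewrite -!sumrB -!big_split /=; apply: eq_bigr => j _; ring.
Qed.

Section Spin.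
Variables (R : comPzRingType) (n : nat).

Definition spin (A : {set 'I_n}) (i : 'I_n) : R := if i \in A then -1 else 1.

Lemma spinE A i : spin A i = 1 - 2 * (i \in A)%:R.
Proof. by rewrite /spin; case: (i \in A); rewrite ?mulr1 ?mulr0 ?subr0 // opprD addNKr. Qed.

Lemma spin_mul_self A i : spin A i * spin A i = 1.
Proof. by rewrite /spin; case: (i \in A); rewrite ?mulrNN mulr1. Qed.

Lemma sum_mem_card (A : {set 'I_n}) : \sum_i ((i \in A)%:R : R) = #|A|%:R.
Proof.
by rewrite -sum1_card natr_sum [RHS]big_mkcond; apply: eq_bigr => i _; case: (i \in A).
Qed.

Lemma sum_spin A : \sum_i spin A i = n%:R - 2 * #|A|%:R.
Proof.
by under eq_bigr do rewrite spinE; rewrite sumrB sumr_const card_ord -mulr_sumr sum_mem_card.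
Qed.

Lemma sum_spinM A B :
  \sum_i spin A i * spin B i =
  n%:R - 2 * #|A|%:R - 2 * #|B|%:R + 4 * #|A :&: B|%:R.
Proof.
have mem_setI i : ((i \in A :&: B)%:R : R) = (i \in A)%:R * (i \in B)%:R.
  by rewrite inE -natrM mulnb.
under eq_bigr do rewrite !spinE.
have -> : (n%:R : R) = \sum_(i < n) 1 by rewrite sumr_const card_ord.
rewrite -!sum_mem_card !mulr_sumr -!sumrB -big_split /=.
by apply: eq_bigr => i _; rewrite mem_setI; ring.
Qed.

End Spin.

Arguments spin {R n} A i.

Lemma normD_le_of_signed (R : realDomainType) (a b c s : R) :
  `|a + b| <= c + s -> `|a - b| <= c - s -> `|a| + `|b| <= c + `|s|.
Proof.
rewrite !ler_norml => /andP[? ?] /andP[? ?].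
have [a0|a0] := lerP 0 a; have [b0|b0] := lerP 0 b; have [s0|s0] := lerP 0 s;
  rewrite ?(ger0_norm a0) ?(ltr0_norm a0) ?(ger0_norm b0) ?(ltr0_norm b0)
          ?(ger0_norm s0) ?(ltr0_norm s0); lra.
Qed.

Lemma spin_corr_normD (R : realDomainType) n (X S T : {set 'I_n}) :
  `|\sum_i spin X i * spin S i| + `|\sum_i spin X i * spin T i| <=
  n%:R + `|\sum_i spin S i * spin T i| :> R.
Proof.
set a := \sum_i _; set b := \sum_i _; set r := \sum_i _.
have signed_bound (e : R) : e = 1 \/ e = -1 -> `|a + e * b| <= n%:R + e * r.
  move=> e_sign.
  have -> : a + e * b = \sum_i spin X i * (spin S i + e * spin T i).
    by rewrite /a /b mulr_sumr -big_split /=; apply: eq_bigr => i _; ring.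
  have -> : n%:R + e * r = \sum_(i < n) (1 + e * (spin S i * spin T i)).
    by rewrite big_split sumr_const card_ord /r mulr_sumr.
  apply: le_trans (ler_norm_sum _ _ _) _; apply: ler_sum => i _.
  rewrite ler_norml /spin.
  by case: e_sign => ->; case: (i \in X); case: (i \in S); case: (i \in T); lra.
have := signed_bound (-1) (or_intror erefl); have := signed_bound 1 (or_introl erefl).
rewrite !mul1r !mulN1r; exact: normD_le_of_signed.
Qed.

Lemma bipG_cut_summandE (R : numFieldType) n (d : R) (S X : {set 'I_n}) i j :
  (if (i \in X) != (j \in X) then bipG d S i j else 0) =
  2 * d / n%:R / 4 * ((1 - spin X i * spin X j) * (1 - spin S i * spin S j)).
Proof.
rewrite /bipG /spin; move: (2 * d / n%:R) => w.
by case: (i \in X); case: (j \in X); case: (i \in S); case: (j \in S) => /=; field.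
Qed.

Lemma cutw_bipG (R : numFieldType) n (d : R) (S X : {set 'I_n}) :
  cutw (bipG d S) X = 2 * d / n%:R / 8 *
    (n%:R ^+ 2 - (\sum_i spin X i) ^+ 2 - (\sum_i spin S i) ^+ 2
     + (\sum_i spin X i * spin S i) ^+ 2).
Proof.
pose Q i j : R := (1 - spin X i * spin X j) * (1 - spin S i * spin S j).
have Q_sym i j : Q i j = Q j i by rewrite /Q; ring.
have Q_diag i : Q i i = 0 by rewrite /Q spin_mul_self subrr mul0r.
have -> : cutw (bipG d S) X =
          2 * d / n%:R / 4 * \sum_(i < n) \sum_(j < n | (i < j)%N) Q i j.
  rewrite /cutw mulr_sumr; apply: eq_bigr => i _; rewrite big_mkcondr mulr_sumr /=.
  by apply: eq_bigr => j _; rewrite bipG_cut_summandE.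
have := double_sum_product_expansion (spin X) (spin S); rewrite card_ord => <-.
rewrite (sum_pairs_sym Q_sym Q_diag) mulr2n.
by move: (2 * d / n%:R) => w; field.
Qed.

Lemma sqr_le_half_of_normD_lt (R : realFieldType) (N a b : R) :
  `|a| + `|b| < 3 / 2 * N -> 3 / 4 * N ^+ 2 < a ^+ 2 -> b ^+ 2 <= N ^+ 2 / 2.
Proof.
rewrite -(real_normK (num_real a)) -(real_normK (num_real b)).
have := normr_ge0 a; have := normr_ge0 b.
move: `|a| `|b| => x y y_ge0 x_ge0 sum_lt sqr_gt.
(* 43/50 < sqrt 3 / 2, so x > 43/50 N and y < 16/25 N, with (16/25)^2 < 1/2. *)
have x_gt : 43 / 50 * N < x by rewrite ltNge; apply/negP => x_le; nra.
nra.
Qed.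

Theorem lemma6p11 (R : realFieldType) (n : nat) (eps : R)
  (A : {set {set 'I_n}}) :
  (0 < n)%N -> (8 %| n)%N -> 0 < eps ->
  let d := 1 / (128 * eps) in
  (forall S, S \in A -> #|S| = (n %/ 2)%N) ->
  (forall S T, S \in A -> T \in A -> bipG d S <> bipG d T ->
     (n%:R : R) / 8 < (#|S :&: T|%:R : R) /\ (#|S :&: T|%:R : R) < 3 * (n%:R : R) / 8) ->
  forall S T, S \in A -> T \in A -> bipG d S <> bipG d T ->
  forall X : {set 'I_n},
    cutw (bipG d S) X > 7 * n%:R * d / 16 ->
    cutw (bipG d T) X <= 6 * n%:R * d / 16.
Proof.
move=> n_gt0 n8 eps_gt0 d card_half inter_bounds S T SA TA neqST X cutS.
have d_gt0 : 0 < d by rewrite divr_gt0 // mulr_gt0.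
have nR_gt0 : 0 < n%:R :> R by rewrite ltr0n.
have n_neq0 : n%:R != 0 :> R by rewrite lt0r_neq0.
have half_n : (n %/ 2)%:R * 2 = n%:R :> R.
  by rewrite -natrM divnK // (dvdn_trans _ n8).
have balanced U : U \in A -> \sum_i spin U i = 0 :> R.
  by move=> UA; rewrite sum_spin card_half // -half_n; ring.
have corrST : `|\sum_i spin S i * spin T i| < n%:R / 2 :> R.
  have [k_gt k_lt] := inter_bounds S T SA TA neqST.
  rewrite sum_spinM (card_half S) // (card_half T) // ltr_norml; apply/andP; split; lra.
have corr_bound := spin_corr_normD R X S T.
rewrite !cutw_bipG (balanced S) // (balanced T) // in cutS *.
set w := 2 * d / n%:R / 8.
have w_gt0 : 0 < w by rewrite /w !divr_gt0 // mulr_gt0.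
have -> : 6 * n%:R * d / 16 = w * (3 / 2 * n%:R ^+ 2) by rewrite /w; field.
have cut7 : 7 * n%:R * d / 16 = w * (7 / 4 * n%:R ^+ 2) by rewrite /w; field.
rewrite cut7 ltr_pM2l // in cutS; rewrite ler_pM2l //.
have sumX_sqr_ge0 := sqr_ge0 (\sum_i spin X i : R).
suff : (\sum_i spin X i * spin T i) ^+ 2 <= n%:R ^+ 2 / 2 :> R by lra.
by apply: (@sqr_le_half_of_normD_lt R n%:R (\sum_i spin X i * spin S i)); lra.
Qed.
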